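(* Let $\Sigma_n=\{x\in\mathbb R^n:x_i\ge0,\ \sum_ix_i\le1\}$, $\phi(x)=\big(\sqrt{1-\sum_{i=1}^nx_i},\sqrt{x_1},\dots,\sqrt{x_n}\big)\in\mathbb R^{n+1}$, $d_{\Sigma_n}(x,y)=2\arccos(\phi(x)\cdot\phi(y))$ and $f(x,y)=\cos(d_{\Sigma_n}(x,y)/2)=\phi(x)\cdot\phi(y)$. Then for each fixed $y\in\Sigma_n$ the function $x\mapsto f(x,y)$ is concave on $\Sigma_n$, and for each fixed $x$ the function $y\mapsto f(x,y)$ is concave on $\Sigma_n$. Consequently, for every convex polytope $\mathcal P\subset\Sigma_n$, its diameter with respect to $d_{\Sigma_n}$ equals $\max\{d_{\Sigma_n}(u,v):\ u,v\text{ vertices of }\mathcal P\}$.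
   Context: $\cdot$ denotes the Euclidean inner product in $\mathbb R^{n+1}$; $d_{\Sigma_n}$ is the Baran distance of the simplex $\Sigma_n$. *)

From HB Require Import structures.
From mathcomp Require Import all_boot all_order all_algebra.
From mathcomp Require Import all_classical all_reals all_analysis.
Set Implicit Arguments. Unset Strict Implicit. Unset Printing Implicit Defensive.
Import Order.TTheory GRing.Theory Num.Theory.
Local Open Scope ring_scope.
Local Open Scope classical_set_scope.

Section Defs.
Variables (R : realType) (n : nat).
Implicit Types x y : 'rV[R]_n.

Definition simplex : set 'rV[R]_n :=
  [set x | (forall i, 0 <= x ord0 i) /\ \sum_i x ord0 i <= 1].

(* phi(x) = (sqrt(1 - sum x_i), sqrt x_1, ..., sqrt x_n) in R^{n+1} *)
Definition phi x : 'rV[R]_n.+1 :=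
  \row_(j < n.+1)
    match fintype.split (j : 'I_(1 + n)) with
    | inl _ => Num.sqrt (1 - \sum_i x ord0 i)
    | inr i => Num.sqrt (x ord0 i)
    end.

Definition dotR (m : nat) (u v : 'rV[R]_m) : R := \sum_i u ord0 i * v ord0 i.

Definition fB x y : R := dotR (phi x) (phi y).

Definition baran_dist x y : R := 2 * acos (fB x y).

Definition concave_on (A : set 'rV[R]_n) (g : 'rV[R]_n -> R) : Prop :=
  forall a b, A a -> A b -> forall t : R, 0 <= t <= 1 ->
    t * g a + (1 - t) * g b <= g (t *: a + (1 - t) *: b).

Definition conv_hull (S : seq 'rV[R]_n) : set 'rV[R]_n :=
  [set x | exists w : 'I_(size S) -> R,
     (forall k, 0 <= w k) /\ \sum_k w k = 1 /\
     x = \sum_k w k *: nth 0 S k].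

(* vertices = extreme points of P *)
Definition is_vertex (P : set 'rV[R]_n) (v : 'rV[R]_n) : Prop :=
  P v /\ forall a b, P a -> P b -> forall t : R, 0 < t < 1 ->
    v = t *: a + (1 - t) *: b -> a = v /\ b = v.

Definition diam (d : 'rV[R]_n -> 'rV[R]_n -> R) (P : set 'rV[R]_n) : R :=
  sup [set d x y | x in P & y in P].

End Defs.

From HB Require Import structures.
From mathcomp Require Import all_boot all_order all_algebra.
From mathcomp Require Import all_classical all_reals all_analysis.
From mathcomp Require Import ring lra.
Import Order.TTheory GRing.Theory Num.Theory.
Local Open Scope ring_scope.
Local Open Scope classical_set_scope.

(* Concavity: f(., y) is a sum of terms sqrt(a(x)) * c with a affine in x and
   c >= 0, and a weighted mean of square roots is at most the square root of the
   weighted mean (a variance is nonnegative).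
   Diameter: since arccos is decreasing, it suffices that the minimum of f over
   P x P is attained at a pair of vertices.  By Jensen, f is minimal at a pair
   of generators (s_i, s_j).  Among the generators s with f(s, s_j) minimal,
   one of maximal Euclidean norm is a vertex: on a segment through it f(., s_j)
   stays minimal by concavity, so by Jensen again both ends have norm at most
   that maximum, which strict convexity of the squared norm forbids unless the
   segment is trivial.  Repeating in the second variable gives the pair. *)

Section WeightedMeans.
Context {R : rcfType} {I : finType} {w : I -> R}.
Hypotheses (w_ge0 : forall k, 0 <= w k) (w_sum1 : \sum_k w k = 1).

Lemma sqr_wmean_le (b : I -> R) :
  (\sum_k w k * b k) ^+ 2 <= \sum_k w k * b k ^+ 2.
Proof.
set mu := \sum_k w k * b k.
have var_ge0 : 0 <= \sum_k w k * (b k - mu) ^+ 2.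
  by apply: sumr_ge0 => k _; rewrite mulr_ge0 ?sqr_ge0.
have varE : \sum_k w k * (b k - mu) ^+ 2 =
    \sum_k w k * b k ^+ 2 - 2 * mu * mu + mu ^+ 2 * \sum_k w k.
  transitivity (\sum_k (w k * b k ^+ 2 - 2 * mu * (w k * b k) + mu ^+ 2 * w k)).
    by apply: eq_bigr => k _; ring.
  by rewrite !big_split /= sumrN -!mulr_sumr.
move: var_ge0; rewrite varE w_sum1; lra.
Qed.

Lemma wmean_sqrt_le (a : I -> R) : (forall k, 0 <= a k) ->
  \sum_k w k * Num.sqrt (a k) <= Num.sqrt (\sum_k w k * a k).
Proof.
move=> a_ge0.
have mean_ge0 : 0 <= \sum_k w k * Num.sqrt (a k).
  by apply: sumr_ge0 => k _; rewrite mulr_ge0 ?sqrtr_ge0.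
rewrite -(ger0_norm mean_ge0) -sqrtr_sqr; apply: ler_wsqrtr.
apply: le_trans (sqr_wmean_le _) _.
by apply: ler_sum => k _; rewrite sqr_sqrtr.
Qed.

End WeightedMeans.

Lemma sqrt_mul_le_mean {R : rcfType} {p q : R} : 0 <= p -> 0 <= q ->
  Num.sqrt p * Num.sqrt q <= (p + q) / 2.
Proof.
move=> p_ge0 q_ge0.
have amgm (u v : R) : u * v <= (u ^+ 2 + v ^+ 2) / 2.
  by have := sqr_ge0 (u - v); lra.
by have := amgm (Num.sqrt p) (Num.sqrt q); rewrite !sqr_sqrtr.
Qed.

Lemma le_acos (R : realType) (a b : R) : -1 <= a -> b <= 1 -> a <= b ->
  acos b <= acos a.
Proof.
move=> a_ge b_le ab.
have a_itv : a \in `[-1, 1]%R by rewrite in_itv /= a_ge (le_trans ab).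
have b_itv : b \in `[-1, 1]%R by rewrite in_itv /= b_le (le_trans a_ge).
have acos_itv (c : R) : c \in `[-1, 1]%R -> acos c \in `[0, pi]%R.
  by rewrite !in_itv /= => c_itv; rewrite acos_ge0 ?acos_lepi.
by rewrite leNgt -(ltr_cos (acos_itv a a_itv) (acos_itv b b_itv)) !acosK // -leNgt.
Qed.

Lemma sup_eq_max (R : realType) (E : set R) (x : R) :
  E x -> ubound E x -> sup E = x.
Proof.
move=> Ex x_ub; apply/le_anti; rewrite ge_sup //=; last by exists x.
by apply: sup_upper_bound => //; split; [exists x | exists x].
Qed.

Definition sqnorm {R : pzRingType} {m : nat} (x : 'rV[R]_m) : R :=
  \sum_i x ord0 i ^+ 2.

Section BaranKernel.
Context {R : realType} {n : nat}.
Implicit Types x y : 'rV[R]_n.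

Lemma phi_ord0 x : phi x ord0 ord0 = Num.sqrt (1 - \sum_i x ord0 i).
Proof. by rewrite mxE; case: splitP. Qed.

Lemma phi_lift x i : phi x ord0 (lift ord0 i) = Num.sqrt (x ord0 i).
Proof.
rewrite mxE; case: splitP => [j /= j_eq | k /= [k_eq]].
  by have := ltn_ord j; rewrite -j_eq.
by congr (Num.sqrt (x ord0 _)); apply: val_inj.
Qed.

Lemma fBE x y : fB x y =
  Num.sqrt (1 - \sum_i x ord0 i) * Num.sqrt (1 - \sum_i y ord0 i)
  + \sum_i Num.sqrt (x ord0 i) * Num.sqrt (y ord0 i).
Proof.
rewrite /fB /dotR big_ord_recl !phi_ord0; congr (_ + _).
by apply: eq_bigr => i _; rewrite !phi_lift.
Qed.

Lemma fBC x y : fB x y = fB y x.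
Proof. by rewrite !fBE mulrC; congr (_ + _); apply: eq_bigr => i _; rewrite mulrC. Qed.

Lemma simplex_subr_sum_ge0 {x} : simplex x -> 0 <= 1 - \sum_i x ord0 i.
Proof. by case=> _; rewrite subr_ge0. Qed.

Lemma fB_ge_convex_comb {I : finType} {w : I -> R} (p : I -> 'rV[R]_n) y :
  (forall k, 0 <= w k) -> \sum_k w k = 1 ->
  (forall k, simplex (p k)) -> simplex y ->
  \sum_k w k * fB (p k) y <= fB (\sum_k w k *: p k) y.
Proof.
move=> w_ge0 w_sum1 p_simplex y_simplex.
have combE i : (\sum_k w k *: p k) ord0 i = \sum_k w k * p k ord0 i.
  by rewrite summxE; apply: eq_bigr => k _; rewrite mxE.
have slackE : 1 - \sum_i (\sum_k w k *: p k) ord0 i =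
              \sum_k w k * (1 - \sum_i p k ord0 i).
  under eq_bigr do rewrite combE.
  rewrite exchange_big /= -[1 in LHS]w_sum1 -sumrB.
  by apply: eq_bigr => k _; rewrite mulrBr mulr1 mulr_sumr.
rewrite fBE slackE; under eq_bigr do rewrite fBE mulrDr.
rewrite big_split /=; apply: lerD.
  under eq_bigr do rewrite mulrA.
  rewrite -mulr_suml; apply: ler_wpM2r; first exact: sqrtr_ge0.
  by apply: wmean_sqrt_le => // k; apply: simplex_subr_sum_ge0.
under eq_bigr do rewrite mulr_sumr.
rewrite exchange_big /=; apply: ler_sum => i _; rewrite combE.
under eq_bigr do rewrite mulrA.
rewrite -mulr_suml; apply: ler_wpM2r; first exact: sqrtr_ge0.
by apply: wmean_sqrt_le => // k; case: (p_simplex k).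
Qed.

Lemma fB_concave y : simplex y -> concave_on (@simplex R n) (fun x => fB x y).
Proof.
move=> y_simplex a b a_simplex b_simplex t /andP [t_ge0 t_le1].
have := @fB_ge_convex_comb bool (fun k => if k then t else 1 - t)
  (fun k => if k then a else b) y.
rewrite !big_bool /=; apply => //.
- by case => //; rewrite subr_ge0.
- by rewrite addrC subrK.
- by case.
Qed.

Lemma fB_ge0_le1 {x y} : simplex x -> simplex y -> 0 <= fB x y <= 1.
Proof.
move=> x_simplex y_simplex.
have x0 := simplex_subr_sum_ge0 x_simplex; have y0 := simplex_subr_sum_ge0 y_simplex.
case: x_simplex => x_ge0 _; case: y_simplex => y_ge0 _.
rewrite fBE; apply/andP; split.
  by rewrite addr_ge0 ?mulr_ge0 ?sqrtr_ge0 ?sumr_ge0 // => i _;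
    rewrite mulr_ge0 ?sqrtr_ge0.
have le0 := sqrt_mul_le_mean x0 y0.
have lei : \sum_i Num.sqrt (x ord0 i) * Num.sqrt (y ord0 i) <=
           (\sum_i x ord0 i + \sum_i y ord0 i) / 2.
  rewrite -big_split mulr_suml; apply: ler_sum => i _; exact: sqrt_mul_le_mean.
lra.
Qed.

Lemma baran_dist_le {x y u v : 'rV[R]_n} :
  simplex x -> simplex y -> simplex u -> simplex v -> fB u v <= fB x y ->
  baran_dist x y <= baran_dist u v.
Proof.
move=> x_simplex y_simplex u_simplex v_simplex uv_le.
have /andP [xy_ge0 xy_le1] := fB_ge0_le1 x_simplex y_simplex.
have /andP [uv_ge0 uv_le1] := fB_ge0_le1 u_simplex v_simplex.
by rewrite /baran_dist ler_pM2l //; apply: le_acos => //; lra.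
Qed.

Lemma sqnorm_convex_comb_le {I : finType} {w : I -> R} (p : I -> 'rV[R]_n) :
  (forall k, 0 <= w k) -> \sum_k w k = 1 ->
  sqnorm (\sum_k w k *: p k) <= \sum_k w k * sqnorm (p k).
Proof.
move=> w_ge0 w_sum1; rewrite /sqnorm.
under [X in _ <= X]eq_bigr do rewrite mulr_sumr.
rewrite [X in _ <= X]exchange_big /=; apply: ler_sum => i _.
rewrite summxE; under [in X in X ^+ 2]eq_bigr do rewrite mxE.
exact: sqr_wmean_le.
Qed.

Lemma sqnorm_segment (a b : 'rV[R]_n) t : sqnorm (t *: a + (1 - t) *: b) =
  t * sqnorm a + (1 - t) * sqnorm b - t * (1 - t) * sqnorm (a - b).
Proof.
rewrite /sqnorm !mulr_sumr -big_split -sumrB /=; apply: eq_bigr => i _.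
by rewrite !mxE; ring.
Qed.

Lemma sqnorm_ge0 (a : 'rV[R]_n) : 0 <= sqnorm a.
Proof. by apply: sumr_ge0 => i _; apply: sqr_ge0. Qed.

Lemma sqnorm_eq0 (a : 'rV[R]_n) : sqnorm a = 0 -> a = 0.
Proof.
move=> a0; apply/rowP => i.
have /= := @psumr_eq0P _ _ xpredT (fun j => a ord0 j ^+ 2)
  (fun j _ => sqr_ge0 _) a0 i isT.
by rewrite mxE => /eqP; rewrite sqrf_eq0 => /eqP.
Qed.

End BaranKernel.

Section HullMinimum.
Context {R : realType} {n : nat} {S : seq 'rV[R]_n} {g : 'rV[R]_n -> R}.
Local Notation s k := (nth 0 S (nat_of_ord k)).
Local Notation P := (conv_hull S).
Hypothesis g_jensen : forall (I : finType) (w : I -> R) (p : I -> 'rV[R]_n),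
  (forall k, 0 <= w k) -> \sum_k w k = 1 -> (forall k, P (p k)) ->
  \sum_k w k * g (p k) <= g (\sum_k w k *: p k).

Lemma conv_hull_nth (k : 'I_(size S)) : P (s k).
Proof.
exists (fun l => (l == k)%:R); split; first by move=> l; rewrite ler0n.
split; first by rewrite (bigD1 k) //= eqxx big1 ?addr0 // => l /negbTE ->.
rewrite (bigD1 k) //= eqxx scale1r big1 ?addr0 // => l /negbTE ->.
by rewrite scale0r.
Qed.

Context {m : R}.
Hypothesis g_nth_ge : forall k : 'I_(size S), m <= g (s k).

Lemma conv_hull_ge {x} : P x -> m <= g x.
Proof.
move=> [w [w_ge0 [w_sum1 ->]]].
apply: le_trans (g_jensen _ _ (fun k => s k) w_ge0 w_sum1 conv_hull_nth).
rewrite -[m]mul1r -w_sum1 mulr_suml; apply: ler_sum => k _.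
exact: ler_wpM2l.
Qed.

Lemma conv_hull_eq_support {w : 'I_(size S) -> R} :
  (forall k, 0 <= w k) -> \sum_k w k = 1 -> g (\sum_k w k *: s k) = m ->
  forall k, 0 < w k -> g (s k) = m.
Proof.
move=> w_ge0 w_sum1 gx k wk_gt0.
have excess_ge0 l : 0 <= w l * (g (s l) - m) by rewrite mulr_ge0 ?subr_ge0.
have excess_eq0 : \sum_l w l * (g (s l) - m) = 0.
  apply/eqP; rewrite eq_le sumr_ge0 // andbT.
  under eq_bigr do rewrite mulrBr.
  rewrite sumrB -mulr_suml w_sum1 mul1r subr_le0 -gx.
  exact: g_jensen _ _ (fun k => s k) w_ge0 w_sum1 conv_hull_nth.
have /eqP := @psumr_eq0P _ _ xpredT _ (fun l _ => excess_ge0 l) excess_eq0 k isT.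
by rewrite mulf_eq0 (gt_eqF wk_gt0) subr_eq0 => /eqP.
Qed.

Lemma conv_hull_sqnorm_le {N x} :
  (forall k : 'I_(size S), g (s k) = m -> sqnorm (s k) <= N) ->
  P x -> g x = m -> sqnorm x <= N.
Proof.
move=> N_ub [w [w_ge0 [w_sum1 xE]]] gx; subst x.
apply: le_trans (sqnorm_convex_comb_le (fun k => s k) w_ge0 w_sum1) _.
rewrite -[N]mul1r -w_sum1 mulr_suml; apply: ler_sum => k _.
have [wk_gt0 | wk_le0] := ltrP 0 (w k).
  apply: ler_wpM2l; first exact: ltW.
  exact/N_ub/(conv_hull_eq_support w_ge0 w_sum1 gx).
by rewrite (@le_anti _ _ (w k) 0) ?wk_le0 ?w_ge0 // !mul0r.
Qed.

Lemma exists_vertex_eq (k0 : 'I_(size S)) : g (s k0) = m ->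
  exists v, is_vertex P v /\ g v = m.
Proof.
move=> gk0.
have [k /eqP gk k_max] := @arg_maxP _ _ _ k0
  (fun k : 'I_(size S) => g (s k) == m) (fun k => sqnorm (s k)) (introT eqP gk0).
exists (s k); split => //; split; first exact: conv_hull_nth.
move=> a b Pa Pb t /andP [t_gt0 t_lt1] skE.
have ga := conv_hull_ge Pa; have gb := conv_hull_ge Pb.
have g_segment : t * g a + (1 - t) * g b <= m.
  rewrite -gk skE; have := g_jensen bool (fun i => if i then t else 1 - t)
    (fun i => if i then a else b).
  rewrite !big_bool /=; apply; [by case; lra | by rewrite addrC subrK | by case].
have ga_eq : g a = m by apply/eqP; rewrite eq_le ga andbT; nra.
have gb_eq : g b = m by apply/eqP; rewrite eq_le gb andbT; nra.
have k_ub (k' : 'I_(size S)) : g (s k') = m -> sqnorm (s k') <= sqnorm (s k).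
  by move=> /eqP /k_max.
have na := conv_hull_sqnorm_le k_ub Pa ga_eq.
have nb := conv_hull_sqnorm_le k_ub Pb gb_eq.
have dist_eq0 : sqnorm (a - b) = 0.
  have := sqnorm_segment a b t; rewrite -skE.
  have := sqnorm_ge0 (a - b); have : 0 < t * (1 - t) by apply: mulr_gt0; lra.
  nra.
move/sqnorm_eq0/subr0_eq: dist_eq0 => ab; subst b.
by rewrite skE -scalerDl addrC subrK scale1r.
Qed.

End HullMinimum.

Section BaranDiameter.
Context {R : realType} {n : nat} {S : seq 'rV[R]_n}.
Local Notation P := (conv_hull S).
Hypothesis P_simplex : P `<=` @simplex R n.

Lemma fB_jensen_hull {y} : simplex y -> forall (I : finType) (w : I -> R) p,
  (forall k, 0 <= w k) -> \sum_k w k = 1 -> (forall k, P (p k)) ->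
  \sum_k w k * fB (p k) y <= fB (\sum_k w k *: p k) y.
Proof.
move=> y_simplex I w p w_ge0 w_sum1 Pp.
by apply: fB_ge_convex_comb => // k; apply/P_simplex.
Qed.

Lemma exists_vertices_fB_min : S != [::] ->
  exists u v, [/\ is_vertex P u, is_vertex P v &
    forall x y, P x -> P y -> fB u v <= fB x y].
Proof.
move=> S_neq0; have size_gt0 : (0 < size S)%N by rewrite lt0n size_eq0.
pose s k : 'rV[R]_n := nth 0 S (@nat_of_ord (size S) k).
have s_simplex k : simplex (s k) by apply/P_simplex/conv_hull_nth.
have [[i j] _ /= ij_min] := @arg_minP _ _ _ (Ordinal size_gt0, Ordinal size_gt0)
  xpredT (fun ij => fB (s ij.1) (s ij.2)) isT.
set m := fB (s i) (s j) in ij_min.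
have fB_hull_ge x y : P x -> P y -> m <= fB x y.
  move=> Px Py; have y_simplex := P_simplex _ Py.
  apply: (conv_hull_ge (g := fun z => fB z y) (fB_jensen_hull y_simplex) _ Px).
  move=> k; rewrite fBC.
  apply: (conv_hull_ge (g := fun z => fB z (s k)) (fB_jensen_hull (s_simplex k)) _ Py).
  by move=> l; rewrite fBC; exact: (ij_min (k, l)).
have [u [Vu fu]] : exists u, is_vertex P u /\ fB u (s j) = m.
  exact: (exists_vertex_eq (g := fun z => fB z (s j))
    (fB_jensen_hull (s_simplex j)) (fun k => ij_min (k, j) isT) i).
have [v [Vv fv]] : exists v, is_vertex P v /\ fB v u = m.
  apply: (exists_vertex_eq (g := fun z => fB z u)
    (fB_jensen_hull (P_simplex _ Vu.1)) _ j).
    by move=> k; apply: fB_hull_ge; [exact: conv_hull_nth | exact: Vu.1].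
  by rewrite fBC.
exists u, v; split => // x y Px Py; rewrite fBC fv; exact: fB_hull_ge.
Qed.

End BaranDiameter.

Theorem mainTheorem15 (R : realType) (n : nat) :
  (forall y : 'rV[R]_n, simplex y ->
     concave_on (@simplex R n) (fun x => fB x y)) /\
  (forall x : 'rV[R]_n, simplex x ->
     concave_on (@simplex R n) (fun y => fB x y)) /\
  (forall S : seq 'rV[R]_n, S != [::] ->
     conv_hull S `<=` @simplex R n ->
     exists u v : 'rV[R]_n,
       is_vertex (conv_hull S) u /\ is_vertex (conv_hull S) v /\
       (forall u' v', is_vertex (conv_hull S) u' -> is_vertex (conv_hull S) v' ->
          baran_dist u' v' <= baran_dist u v) /\
       diam (@baran_dist R n) (conv_hull S) = baran_dist u v).
Proof.
split; first exact: fB_concave.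
split; first by move=> x x_simplex a b Sa Sb t t01; rewrite !(fBC x); exact: fB_concave.
move=> S S_neq0 P_simplex.
have [u [v [Vu Vv uv_min]]] := exists_vertices_fB_min P_simplex S_neq0.
have dist_le x y : conv_hull S x -> conv_hull S y -> baran_dist x y <= baran_dist u v.
  move=> Px Py; apply: (baran_dist_le (P_simplex _ Px) (P_simplex _ Py)
    (P_simplex _ Vu.1) (P_simplex _ Vv.1) (uv_min _ _ Px Py)).
exists u, v; do 2!split => //; split.
  by move=> u' v' [Pu' _] [Pv' _]; exact: dist_le.
apply: sup_eq_max; first by exists u; [exact: Vu.1 | exists v; [exact: Vv.1 |]].
by move=> _ [x Px [y Py <-]]; exact: dist_le.
Qed.
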